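(* Let $A$ be a compact convex set, $B$ a zonoid and $C$ a compact set in $\mathbb{R}^n$. Then $|A+B+C|+|A|\ge|A+B|+|A+C|$.
   Context: $|\cdot|$ is $n$-dimensional Lebesgue measure and $+$ is Minkowski addition. A zonotope is a Minkowski sum of finitely many line segments; a zonoid is a limit of zonotopes in the Hausdorff metric. *)

From HB Require Import structures.
From mathcomp Require Import all_boot all_order all_algebra.
From mathcomp Require Import all_classical all_reals all_analysis.
Set Implicit Arguments. Unset Strict Implicit. Unset Printing Implicit Defensive.
Import Order.TTheory GRing.Theory Num.Theory.
Import numFieldNormedType.Exports.
Local Open Scope classical_set_scope.
Local Open Scope ring_scope.

Definition mink_sum (R : realType) (n : nat) (A B : set 'rV[R]_n) : set 'rV[R]_n :=
  [set a + b | a in A & b in B].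

Definition convex_setn (R : realType) (n : nat) (A : set 'rV[R]_n) : Prop :=
  forall x y (t : R), A x -> A y -> 0 <= t -> t <= 1 -> A (t *: x + (1 - t) *: y).

Definition edist (R : realType) (n : nat) (x y : 'rV[R]_n) : R :=
  Num.sqrt (\sum_(i < n) (x ord0 i - y ord0 i) ^+ 2).

(* Zonotope: Minkowski sum of finitely many segments [a_i, b_i]
   (the empty sum being the point {0}). *)
Definition zonotope (R : realType) (n : nat) (Z : set 'rV[R]_n) : Prop :=
  exists (k : nat) (a b : 'I_k -> 'rV[R]_n),
    Z = [set z | exists t : 'I_k -> R, (forall i, 0 <= t i <= 1) /\
                  z = \sum_(i < k) ((1 - t i) *: a i + t i *: b i)].

Definition hausdorff_le (R : realType) (n : nat) (K L : set 'rV[R]_n) (e : R) : Prop :=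
  (forall x, K x -> exists y, L y /\ edist x y <= e) /\
  (forall y, L y -> exists x, K x /\ edist x y <= e).

Definition zonoid (R : realType) (n : nat) (B : set 'rV[R]_n) : Prop :=
  compact B /\
  forall e : R, 0 < e -> exists Z, zonotope Z /\ hausdorff_le B Z e.

Definition box (R : realType) (n : nat) (a b : 'rV[R]_n) : set 'rV[R]_n :=
  [set x | forall i, a ord0 i <= x ord0 i <= b ord0 i].
Definition box_vol (R : realType) (n : nat) (a b : 'rV[R]_n) : R :=
  \prod_(i < n) Num.max 0 (b ord0 i - a ord0 i).

(* n-dimensional Lebesgue (outer) measure: infimum of total volumes of
   countable covers by boxes.  On compact (hence Lebesgue measurable) sets
   this is the Lebesgue measure |.|. *)
Definition lebesgue_n (R : realType) (n : nat) (A : set 'rV[R]_n) : \bar R :=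
  ereal_inf [set s : \bar R | exists a b : nat -> 'rV[R]_n,
     A `<=` \bigcup_k box (a k) (b k) /\
     s = (\sum_(0 <= k <oo) (box_vol (a k) (b k))%:E)%E].

(* Let S = [0, u] be a segment, K compact convex and L a compact set containing
   K.  The points of L \ K whose backward ray {x - t u | t > 0} misses K lie in
   (L + S) \ (K + S); the others, translated by u, lie there as well (this is where
   the convexity of K enters), and the two pieces stay disjoint.  Hence
   |L \ K| <= |(L + S) \ (K + S)|, that is |K + S| + |L| <= |L + S| + |K|.
   A zonotope is a translate of Z' + S with Z' a zonotope with one segment fewer,
   so taking K = A + Z' and L = A + Z' + C, which contains a translate of K as C is
   nonempty, gives the inequality for zonotopes by induction.  A zonoid B is
   e-close to a zonotope Z, whence A + B is contained in (A + Q_e) + Z and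
   (A + Q_e) + Z + C in (A + B + C) + Q_2e, for the cube Q_e = [-e, e]^n; the
   continuity of the measure along decreasing compact sets concludes.  In dimension 0 every box has volume 1, so
   lebesgue_n is +oo there and the inequality is trivial. *)

From Pilot Require Import Defs.
From HB Require Import structures.
From mathcomp Require Import all_boot all_order all_algebra.
From mathcomp Require Import all_classical all_reals all_analysis.
From mathcomp Require Import ring lra.
Import Order.TTheory GRing.Theory Num.Theory.
Import numFieldNormedType.Exports.
Local Open Scope classical_set_scope.
Local Open Scope ring_scope.

Set Implicit Arguments. Unset Strict Implicit. Unset Printing Implicit Defensive.

Section OuterMeasure.
Variables (R : realType) (n : nat).
Notation V := 'rV[R]_n.
Notation lam := (@lebesgue_n R n).
Local Open Scope ereal_scope.

Lemma box_vol_ge0 (a b : V) : (0 <= box_vol a b)%R.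
Proof. by apply: prodr_ge0 => i _; rewrite le_max lexx. Qed.

Lemma box_vol_series_ge0 (a b : nat -> V) :
  0 <= \sum_(0 <= k <oo) (box_vol (a k) (b k))%:E.
Proof. by apply: nneseries_ge0 => k _; rewrite lee_fin box_vol_ge0. Qed.

Lemma lebesgue_n_ge0 X : 0 <= lam X.
Proof. by apply: le_ereal_inf_tmp => _ [a [b [_ ->]]]; exact: box_vol_series_ge0. Qed.

Lemma lebesgue_n_le_cover X (a b : nat -> V) :
  X `<=` \bigcup_k box (a k) (b k) ->
  lam X <= \sum_(0 <= k <oo) (box_vol (a k) (b k))%:E.
Proof. by move=> Xab; apply: ereal_inf_lbound; exists a, b. Qed.

Lemma le_lebesgue_n : {homo lam : A B / A `<=` B >-> A <= B}.
Proof.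
move=> A B AB; apply: ereal_inf_le_tmp => _ [a [b [Bab ->]]].
by exists a, b; split => //; apply: subset_trans Bab.
Qed.

Lemma lebesgue_n_cover_near X (e : R) : lam X < +oo -> (0 < e)%R ->
  exists a b : nat -> V, X `<=` \bigcup_k box (a k) (b k) /\
    \sum_(0 <= k <oo) (box_vol (a k) (b k))%:E <= lam X + e%:E.
Proof.
move=> Xoo e0; have Xfin : lam X \is a fin_num.
  by rewrite ge0_fin_numE // lebesgue_n_ge0.
have [_ [a [b [Xab ->]]] /ltW le_e] := lb_ereal_inf_adherent e0 Xfin.
by exists a, b.
Qed.

Lemma lebesgue_n_le_double_cover X (a b : nat -> nat -> V) :
  X `<=` \bigcup_i \bigcup_j box (a i j) (b i j) ->
  lam X <= \sum_(i <oo) \sum_(j <oo) (box_vol (a i j) (b i j))%:E.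
Proof.
move=> Xab; pose h (p : nat * nat) := (box_vol (a p.1 p.2) (b p.1 p.2))%:E.
have h0 p : 0 <= h p by rewrite lee_fin box_vol_ge0.
have /card_esym/ppcard_eqP[f] := card_nat2.
apply: (@le_trans _ _ (\esum_(p in setT) h p)).
  apply: le_trans (@lebesgue_n_le_cover _ (fun m => a (f m).1 (f m).2)
                                         (fun m => b (f m).1 (f m).2) _) _.
    move=> x /Xab [i _ [j _ xij]]; exists (f^-1%FUN (i, j)) => //=.
    by rewrite invK ?inE.
  rewrite nneseries_esumT; last by move=> m; exact: (h0 (f m)).
  by rewrite (@reindex_esum _ _ _ setT setT f h) //; exact: splitbij_sub.
rewrite nneseries_esumT; last by move=> i; exact: box_vol_series_ge0.
rewrite (@eq_esum _ _ setT _ (fun i => \esum_(j in setT) h (i, j))); last first.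
  by move=> i _; rewrite nneseries_esumT => // j; rewrite lee_fin box_vol_ge0.
by rewrite esum_esum // (_ : setT `*`` _ = setT) // predeqE => -[].
Qed.

Lemma lebesgue_n_sigma_subadditive : sigma_subadditive lam.
Proof.
move=> A; have [[i ioo]|] := pselect (exists i, lam (A i) = +oo).
  rewrite (eseries_pinfty _ _ ioo) ?leey// => k _.
  by rewrite -ltNye (lt_le_trans _ (lebesgue_n_ge0 _)).
rewrite -forallNE => Afin; apply/lee_addgt0Pr => e e0.
rewrite (le_trans _ (epsilon_trick _ _ (ltW e0))) //; last by move=> k; exact: lebesgue_n_ge0.
have ek0 k : (0 < e / (2 ^ k.+1)%:R)%R by rewrite divr_gt0 // ltr0n expn_gt0.
have Akoo k : lam (A k) < +oo by rewrite ltey; apply/eqP; exact: Afin.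
have [ab Aab] := choice (fun k => lebesgue_n_cover_near (Akoo k) (ek0 k)).
have [cb Ab] := choice Aab.
apply: le_trans (@lebesgue_n_le_double_cover _ ab cb _) _.
  by move=> x [k _ /(Ab k).1 xk]; exists k.
apply: lee_lim.
- by apply: is_cvg_nneseries => k _ _; exact: box_vol_series_ge0.
- apply: is_cvg_nneseries => k _ _; rewrite adde_ge0 ?lebesgue_n_ge0 //.
  by rewrite lee_fin divr_ge0 // ltW.
- by near=> k; apply: lee_sum => i _; exact: (Ab i).2.
Unshelve. all: by end_near. Qed.

Definition translate (X : set V) (v : V) : set V := [set (x + v)%R | x in X].

Lemma lebesgue_n_translate_le X v : lam (translate X v) <= lam X.
Proof.
apply: le_ereal_inf_tmp => _ [a [b [Xab ->]]].
have -> : \sum_(0 <= k <oo) (box_vol (a k) (b k))%:E =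
          \sum_(0 <= k <oo) (box_vol (a k + v) (b k + v))%:E.
  apply: eq_eseriesr => k _; congr EFin; apply: eq_bigr => i _.
  by rewrite !mxE opprD addrACA subrr addr0.
apply: lebesgue_n_le_cover => _ [x Xx <-]; have [k _ xk] := Xab x Xx.
by exists k => // i; rewrite !mxE !lerD2r.
Qed.

Lemma lebesgue_n_translate X v : lam (translate X v) = lam X.
Proof.
apply/eqP; rewrite eq_le lebesgue_n_translate_le /=.
apply: le_trans (lebesgue_n_translate_le (translate X v) (- v)%R).
apply: le_lebesgue_n => x Xx; exists (x + v)%R; first by exists x.
by rewrite addrK.
Qed.

End OuterMeasure.

Lemma lebesgue_n_dim0 (R : realType) (X : set 'rV[R]_0) : lebesgue_n X = +oo%E.
Proof.
apply/eqP; rewrite eq_le leey /=; apply: le_ereal_inf_tmp => _ [a [b [_ ->]]].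
have -> : (\sum_(0 <= k <oo) (box_vol (a k) (b k))%:E = \sum_(0 <= k <oo) 1%:E)%E.
  by apply: eq_eseriesr => k _; rewrite /box_vol big_ord0.
rewrite leye_eq; apply/eqP/cvg_lim => //.
have -> : (fun N => \sum_(0 <= k < N) (1%:E : \bar R))%E = (fun N => (N%:R : R)%:E).
  apply: funext => N; rewrite sumEFin; congr EFin.
  by rewrite big_const_nat subn0 iter_addr addr0.
by apply/cvgenyP.
Qed.

Lemma lebesgue_n0 (R : realType) (n : nat) : lebesgue_n (set0 : set 'rV[R]_n.+1) = 0%E.
Proof.
apply/eqP; rewrite eq_le lebesgue_n_ge0 andbT.
apply: le_trans (@lebesgue_n_le_cover _ _ set0 (fun=> const_mx 1) (fun=> 0) (sub0set _)) _.
rewrite eseries0 // => k _ _.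
rewrite /box_vol big_ord_recl !mxE sub0r.
by rewrite (_ : Num.max 0 (-1) = 0) ?mul0r // max_l // lerN10.
Qed.

Lemma set_itvccP (R : realType) (a b t : R) : `[a, b]%classic t <-> a <= t <= b.
Proof. by rewrite /= in_itv. Qed.

Section Minkowski.
Variables (R : realType) (n : nat).
Notation V := 'rV[R]_n.

Lemma mink_sumA (A B C : set V) :
  mink_sum (mink_sum A B) C = mink_sum A (mink_sum B C).
Proof.
rewrite predeqE => x; split.
  move=> [_ [a Aa [b Bb <-]] [c Cc <-]]; exists a => //; exists (b + c).
    by exists b => //; exists c.
  by rewrite addrA.
move=> [a Aa [_ [b Bb [c Cc <-]] <-]]; exists (a + b).
  by exists a => //; exists b.
by exists c => //; rewrite addrA.
Qed.

Lemma mink_sumC (A B : set V) : mink_sum A B = mink_sum B A.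
Proof.
by rewrite predeqE => x; split => -[a Aa [b Bb <-]]; exists b => //; exists a => //;
  rewrite addrC.
Qed.

Lemma mink_sumS (A A' B B' : set V) : A `<=` A' -> B `<=` B' ->
  mink_sum A B `<=` mink_sum A' B'.
Proof.
by move=> AA' BB' x [a Aa [b Bb <-]]; exists a; [exact: AA'|exists b => //; exact: BB'].
Qed.

Lemma translateE (A : set V) a : translate A a = mink_sum A [set a].
Proof.
rewrite predeqE => x; split; first by move=> [y Ay <-]; exists y => //; exists a.
by move=> [y Ay [_ -> <-]]; exists y.
Qed.

Lemma mink_sum_zero (A : set V) : mink_sum A [set 0] = A.
Proof.
rewrite predeqE => x; split; first by move=> [a Aa [_ -> <-]]; rewrite addr0.
by move=> Ax; exists x => //; exists 0 => //; rewrite addr0.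
Qed.

Lemma mink_sum_translatel (A B : set V) a :
  mink_sum (translate A a) B = translate (mink_sum A B) a.
Proof. by rewrite !translateE mink_sumA (mink_sumC [set a]) -mink_sumA. Qed.

Lemma mink_sum_compact (A B : set V) :
  compact A -> compact B -> compact (mink_sum A B).
Proof.
move=> cA cB.
have -> : mink_sum A B = (fun p : V * V => p.1 + p.2) @` (A `*` B).
  rewrite predeqE => x; split.
    by move=> [a Aa [b Bb <-]]; exists (a, b).
  by move=> [[a b] [/= Aa Bb] <-]; exists a => //; exists b.
apply: continuous_compact; last exact: compact_setX.
by apply: continuous_subspaceT => p; apply: add_continuous.
Qed.

Lemma translate_compact (A : set V) a : compact A -> compact (translate A a).
Proof.
by move=> cA; rewrite translateE; apply: mink_sum_compact => //; exact: compact_set1.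
Qed.

Lemma mink_sum_convex (A B : set V) : convex_setn A -> convex_setn B ->
  convex_setn (mink_sum A B).
Proof.
move=> cA cB _ _ t [a1 Aa1 [b1 Bb1 <-]] [a2 Aa2 [b2 Bb2 <-]] t0 t1.
exists (t *: a1 + (1 - t) *: a2); first exact: cA.
exists (t *: b1 + (1 - t) *: b2); first exact: cB.
by rewrite !scalerDr addrACA.
Qed.

Lemma translate_convex (A : set V) a : convex_setn A -> convex_setn (translate A a).
Proof.
move=> cA _ _ t [x Ax <-] [y Ay <-] t0 t1; exists (t *: x + (1 - t) *: y).
  exact: cA.
by apply/rowP => j; rewrite !mxE; ring.
Qed.

Definition line_segment (u : V) (a b : R) : set V := [set t *: u | t in `[a, b]].

Lemma line_segment_compact u a b : compact (line_segment u a b).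
Proof.
apply: continuous_compact; last exact: segment_compact.
by apply: continuous_subspaceT => t; apply: scalel_continuous.
Qed.

Lemma line_segment_convex u a b : convex_setn (line_segment u a b).
Proof.
move=> _ _ t [s1 /set_itvccP/andP[as1 s1b] <-] [s2 /set_itvccP/andP[as2 s2b] <-] t0 t1.
exists (t * s1 + (1 - t) * s2); last by apply/rowP => j; rewrite !mxE; ring.
by apply/set_itvccP; apply/andP; split; nra.
Qed.

Definition zonotope_of k (a b : 'I_k -> V) : set V :=
  [set z | exists t : 'I_k -> R, (forall i, 0 <= t i <= 1) /\
                  z = \sum_(i < k) ((1 - t i) *: a i + t i *: b i)].

Lemma zonotope_of0 (a b : 'I_0 -> V) : zonotope_of a b = [set 0].
Proof.
rewrite predeqE => x; split; first by move=> [t [_ ->]]; rewrite big_ord0.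
by move=> ->; exists (fun=> 0); split => [[]//|]; rewrite big_ord0.
Qed.

Lemma zonotope_ofS k (a b : 'I_k.+1 -> V) :
  let w := widen_ord (leqnSn k) in
  zonotope_of a b =
  translate (mink_sum (zonotope_of (a \o w) (b \o w))
                      (line_segment (b ord_max - a ord_max) 0 1)) (a ord_max).
Proof.
move=> w; rewrite predeqE => x; split.
  move=> [t [t01 ->]]; rewrite big_ord_recr /=.
  pose z := \sum_(i < k) ((1 - t (w i)) *: a (w i) + t (w i) *: b (w i)).
  exists (z + t ord_max *: (b ord_max - a ord_max)).
    exists z; first by exists (t \o w); split => // i; exact: t01.
    exists (t ord_max *: (b ord_max - a ord_max)) => //.
    by exists (t ord_max) => //; apply/set_itvccP; exact: t01.
  rewrite -addrA; congr (_ + _); apply/rowP => j; rewrite !mxE; ring.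
move=> [_ [_ [t' [t01 ->]] [_ [s /set_itvccP s01 <-]] <-]] <-.
pose t (i : 'I_k.+1) := if insub (val i) is Some j then t' j else s.
have tw i : t (w i) = t' i.
  by rewrite /t /= insubT /=; [exact: ltn_ord|move=> ?; congr t'; apply: val_inj].
have tm : t ord_max = s by rewrite /t insubF //= ltnn.
exists t; split.
  by move=> i; rewrite /t; case: insub => // j; exact: t01.
rewrite big_ord_recr /= tm; under [X in _ = X + _]eq_bigr do rewrite tw.
rewrite -addrA; congr (_ + _); apply/rowP => j; rewrite !mxE; ring.
Qed.

Lemma zonotope_of_compact k (a b : 'I_k -> V) : compact (zonotope_of a b).
Proof.
elim: k a b => [|k IH] a b; first by rewrite zonotope_of0; exact: compact_set1.
rewrite zonotope_ofS; apply: translate_compact; apply: mink_sum_compact => //.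
exact: line_segment_compact.
Qed.

Lemma zonotope_of_convex k (a b : 'I_k -> V) : convex_setn (zonotope_of a b).
Proof.
elim: k a b => [|k IH] a b.
  by rewrite zonotope_of0 => _ _ t -> -> _ _; rewrite !scaler0 addr0.
rewrite zonotope_ofS; apply: translate_convex; apply: mink_sum_convex => //.
exact: line_segment_convex.
Qed.

End Minkowski.

Lemma caratheodory_subset (R : realType) (T : Type) (mu : set T -> \bar R) (A X : set T) :
  mu.-caratheodory A -> A `<=` X -> mu X = (mu A + mu (X `\` A))%E.
Proof. by move=> mA AX; rewrite (mA X) setIidr. Qed.

Lemma max0_split (R : realDomainType) (a b c : R) :
  Num.max 0 (Num.min b c - a) + Num.max 0 (b - Num.max a c) = Num.max 0 (b - a).
Proof.
rewrite (minEle b c) (maxEle a c); case: (leP b c) => ?; case: (leP a c) => ?;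
  rewrite !maxEle; repeat case: leP => ?; lra.
Qed.

Section Caratheodory.
Variables (R : realType) (n : nat).
Notation V := 'rV[R]_n.+1.
Notation lam := (@lebesgue_n R n.+1).

HB.instance Definition _ := isOuterMeasure.Build R V lam (@lebesgue_n0 R n)
  (@lebesgue_n_ge0 R n.+1) (@le_lebesgue_n R n.+1) (@lebesgue_n_sigma_subadditive R n.+1).

Notation M := (caratheodory_type lam).

Definition set_coord (v : V) i (r : R) : V := \row_j (if j == i then r else v ord0 j).

Lemma box_vol_split (a b : V) i c :
  box_vol a (set_coord b i (Num.min (b ord0 i) c)) +
  box_vol (set_coord a i (Num.max (a ord0 i) c)) b = box_vol a b.
Proof.
rewrite /box_vol (bigD1 i) //= [X in _ + X](bigD1 i) //= [X in _ = X](bigD1 i) //=.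
rewrite !mxE eqxx -(max0_split (a ord0 i) (b ord0 i) c) mulrDl.
congr (_ * _ + _ * _); apply: eq_bigr => j ji; by rewrite mxE (negbTE ji).
Qed.

Local Open Scope ereal_scope.

Lemma lebesgue_n_coord_split_le (Y Z : set V) (a b : nat -> V) i c :
  Y `|` Z `<=` \bigcup_k box (a k) (b k) ->
  (forall x, Y x -> x ord0 i <= c)%R -> (forall x, Z x -> c <= x ord0 i)%R ->
  lam Y + lam Z <= \sum_(0 <= k <oo) (box_vol (a k) (b k))%:E.
Proof.
move=> YZab Yc Zc.
under eq_eseriesr do rewrite -(box_vol_split _ _ i c) EFinD.
rewrite nneseriesD => [|k _|k _]; rewrite ?lee_fin ?box_vol_ge0 //.
apply: leeD; apply: lebesgue_n_le_cover => x Xx.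
- have [k _ xk] := YZab x (or_introl Xx); exists k => // j; rewrite mxE.
  case: eqP => [->|_]; last exact: xk.
  by have /andP[-> /= ?] := xk i; rewrite le_min; apply/andP; split => //; exact: Yc.
- have [k _ xk] := YZab x (or_intror Xx); exists k => // j; rewrite mxE.
  case: eqP => [->|_]; last exact: xk.
  by have /andP[? ->] := xk i; rewrite ge_max andbT; apply/andP; split => //; exact: Zc.
Qed.

Lemma caratheodory_coord_split (H : set V) i c :
  (forall x, H x -> x ord0 i <= c)%R -> (forall x, ~ H x -> c <= x ord0 i)%R ->
  lam.-caratheodory H.
Proof.
move=> Hc nHc; apply: le_caratheodory_measurable => X.
apply: le_ereal_inf_tmp => _ [a [b [Xab ->]]].
apply: (lebesgue_n_coord_split_le (i := i) (c := c)).
- by move=> x [[]|[]] *; exact: Xab.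
- by move=> x [_]; exact: Hc.
- by move=> x [_]; exact: nHc.
Qed.

Lemma box_caratheodory (a b : V) : lam.-caratheodory (box a b).
Proof.
pose S i : set M := [set x | x ord0 i <= b ord0 i]%R `&` ~` [set x | x ord0 i < a ord0 i]%R.
have -> : box a b = \bigcap_(i in setT) S i.
  rewrite predeqE => x; split => [xab i _|xS i].
    by have /andP[? ?] := xab i; split => //; apply/negP; rewrite -leNgt.
  by have [? /negP] := xS i I; rewrite -leNgt => ?; apply/andP.
apply: (@fin_bigcap_measurable _ M) => [|i _]; first exact: finite_finset.
apply: measurableI; last apply: measurableC.
- apply: (caratheodory_coord_split (i := i) (c := b ord0 i)) => x // /negP.
  by rewrite -ltNge => /ltW.
- apply: (caratheodory_coord_split (i := i) (c := a ord0 i)) => x /=; first exact: ltW.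
  by move/negP; rewrite -leNgt.
Qed.

Definition row_ratr (p : 'rV[rat]_n.+1) : V := map_mx ratr p.

Lemma open_rat_box (U : set V) x : open U -> U x ->
  exists pq : 'rV[rat]_n.+1 * 'rV[rat]_n.+1,
    box (row_ratr pq.1) (row_ratr pq.2) x /\ box (row_ratr pq.1) (row_ratr pq.2) `<=` U.
Proof.
move=> oU /oU /nbhs_ballP[e /= e0 exU].
have hp j : exists q : rat, ratr q \in `](x ord0 j - e / 2)%R, x ord0 j[.
  by apply: rat_in_itvoo; rewrite ltrBlDr ltrDl divr_gt0.
have hq j : exists q : rat, ratr q \in `](x ord0 j), (x ord0 j + e / 2)%R[.
  by apply: rat_in_itvoo; rewrite ltrDl divr_gt0.
have [fp Hp] := choice hp; have [fq Hq] := choice hq.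
exists (\row_j fp j, \row_j fq j); split => [j|y yb]; rewrite /= ?mxE.
  have := Hp j; have := Hq j; rewrite !in_itv /= => /andP[? ?] /andP[? ?].
  by apply/andP; split; apply: ltW.
apply: exU; split => // i j; rewrite ord1.
have /andP[] := yb j; rewrite !mxE => y1 y2.
have := Hp j; have := Hq j; rewrite !in_itv /= => /andP[? ?] /andP[? ?].
rewrite /ball /= ltr_norml; apply/andP; split; lra.
Qed.

Lemma open_caratheodory (U : set V) : open U -> lam.-caratheodory U.
Proof.
move=> oU; pose F k : set M := match unpickle k with
  | Some pq => if pselect (box (row_ratr pq.1) (row_ratr pq.2) `<=` U)
               then box (row_ratr pq.1) (row_ratr pq.2) else set0
  | None => set0 end.
have -> : U = \bigcup_(k in setT) F k.
  rewrite predeqE => x; split; last first.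
    move=> [k _]; rewrite /F; case: unpickle => // pq.
    by case: pselect => // sU /sU.
  move=> /(open_rat_box oU) [pq [xpq pqU]]; exists (pickle pq) => //.
  by rewrite /F pickleK; case: pselect.
apply: (@bigcup_measurable _ M) => k _; rewrite /F; case: unpickle => // pq.
by case: pselect => sU; [exact: box_caratheodory | exact: measurable0].
Qed.

Lemma compact_caratheodory (K : set V) : compact K -> lam.-caratheodory K.
Proof.
move=> cK; have /closed_openC/open_caratheodory/(@measurableC _ M) : closed K.
  exact: compact_closed.
by rewrite setCK.
Qed.

Lemma lebesgue_n_box_lty (a b : V) : lam (box a b) < +oo.
Proof.
pose a' k : V := if k is 0 then a else const_mx 1%R.
pose b' k : V := if k is 0 then b else 0%R.
apply: (le_lt_trans (@lebesgue_n_le_cover _ _ _ a' b' _)).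
  by move=> x xab; exists 0%N.
have -> : \sum_(0 <= k <oo) (box_vol (a' k) (b' k))%:E = (box_vol a b)%:E.
  apply: lim_near_cst => //; near=> N.
  have N0 : (0 < N)%N by near: N; exists 1%N.
  rewrite -(prednK N0) big_nat_recl // big1 ?adde0 // => k _.
  rewrite /a' /b' /box_vol big_ord_recl !mxE sub0r.
  by rewrite (_ : Num.max 0 (-1) = 0)%R ?mul0r // max_l // lerN10.
by rewrite ltry.
Unshelve. all: by end_near. Qed.

Lemma lebesgue_n_compact_fin (K : set V) : compact K -> lam K \is a fin_num.
Proof.
move=> /compact_bounded [r [_ Hr]].
rewrite ge0_fin_numE ?lebesgue_n_ge0 //.
apply: le_lt_trans (lebesgue_n_box_lty (const_mx (- (r + 1))%R) (const_mx (r + 1)%R)).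
apply: le_lebesgue_n => x Kx j; rewrite !mxE -ler_norml.
have xr : (`|x| <= r + 1)%R by apply: Hr; rewrite ?ltrDl.
apply: le_trans xr; rewrite [leRHS]/Num.norm /= mx_normrE.
by apply/bigmax_geP; right; exists (ord0, j).
Qed.

End Caratheodory.

Section Shadow.
Variables (R : realType) (n : nat).
Notation V := 'rV[R]_n.+1.
Notation lam := (@lebesgue_n R n.+1).
Notation M := (caratheodory_type lam).

Definition shadow (K : set V) (u : V) : set V :=
  [set x | exists2 t, 0 < t & K (x - t *: u)].

Lemma shadowE K u :
  shadow K u = \bigcup_m mink_sum K (line_segment u m.+1%:R^-1 m.+1%:R).
Proof.
rewrite predeqE => x; split.
  move=> [t t0 Kt]; exists (Num.truncn (t + t^-1)) => //.
  exists (x - t *: u) => //; exists (t *: u); last by rewrite subrK.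
  exists t => //; apply/set_itvccP.
  have := truncnS_gt (t + t^-1); set m := (Num.truncn _).+1%:R => tm.
  have t'0 : 0 < t^-1 by rewrite invr_gt0.
  rewrite invf_ple ?posrE ?ltr0n //; apply/andP; split; apply: ltW; lra.
move=> [m _ [k Kk [_ [t /set_itvccP/andP[t1 _] <-] <-]]].
exists t; last by rewrite addrK.
by apply: lt_le_trans t1; rewrite invr_gt0.
Qed.

Lemma shadow_caratheodory K u : compact K -> lam.-caratheodory (shadow K u).
Proof.
move=> cK; rewrite shadowE; apply: (@bigcup_measurable _ M) => m _.
by apply: compact_caratheodory; apply: mink_sum_compact => //; exact: line_segment_compact.
Qed.

Lemma translate_shadow K u : translate (shadow K u) u `<=` shadow K u.
Proof.
move=> _ [x [t t0 Kt] <-]; exists (t + 1); first lra.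
by rewrite scalerDl scale1r opprD addrA (addrAC x u) addrK.
Qed.

End Shadow.

Section SegmentSum.
Variables (R : realType) (n : nat).
Notation V := 'rV[R]_n.+1.
Notation lam := (@lebesgue_n R n.+1).
Notation M := (caratheodory_type lam).
Variables (K L : set V) (u : V).
Hypotheses (cK : compact K) (convK : convex_setn K) (cL : compact L) (KL : K `<=` L).
Let S := line_segment u 0 1.
Let D := mink_sum L S `\` mink_sum K S.

Lemma setD_shadow_sub_mink_segment : (L `\` K) `\` shadow K u `<=` D.
Proof.
move=> x [[Lx nKx] nWx]; split.
  exists x => //; exists 0; last by rewrite addr0.
  by exists 0; rewrite ?scale0r //; apply/set_itvccP; rewrite lexx ler01.
move=> [k Kk [_ [t /set_itvccP/andP[t0 t1] <-] xE]].
have [tz|tp] := eqVneq t 0; first by apply: nKx; rewrite -xE tz scale0r addr0.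
apply: nWx; exists t; first by rewrite lt_neqAle eq_sym tp.
by rewrite -xE addrK.
Qed.

Lemma translate_shadow_sub_mink_segment :
  translate ((L `\` K) `&` shadow K u) u `<=` D.
Proof.
move=> _ [x [[Lx nKx] [t t0 Kt]] <-]; split.
  exists x => //; exists u => //.
  by exists 1; rewrite ?scale1r //; apply/set_itvccP; rewrite lexx ler01.
move=> [k Kk [_ [s /set_itvccP/andP[s0 s1] <-] xE]].
have [s1e|s1n] := eqVneq s 1.
  by apply: nKx; move: xE; rewrite s1e scale1r => /addIr <-.
have r0 : 0 < 1 - s by rewrite subr_gt0 lt_neqAle s1n.
(* x lies on the segment between x - t u and k = x + (1 - s) u, both in K *)
apply: nKx.
have -> : x = (t / (t + (1 - s))) *: k + (1 - t / (t + (1 - s))) *: (x - t *: u).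
  have -> : k = x + (1 - s) *: u.
    by apply/(addIr (s *: u)); rewrite xE -addrA -scalerDl subrK scale1r.
  by apply/rowP => j; rewrite !mxE; field; lra.
apply: convK => //; first by apply: divr_ge0; lra.
by rewrite ler_pdivrMr; lra.
Qed.

Local Open Scope ereal_scope.

Lemma lebesgue_n_setD_le_mink_segment : lam (L `\` K) <= lam D.
Proof.
pose P1 := (L `\` K) `\` shadow K u.
pose P2 := (L `\` K) `&` shadow K u.
have mP1 : lam.-caratheodory P1.
  apply: (@measurableD _ M); last exact: shadow_caratheodory.
  by apply: (@measurableD _ M); exact: compact_caratheodory.
have P1P2 : P1 `&` translate P2 u `<=` set0.
  move=> y [[_ nWy] [x [_ Wx] xy]]; apply: nWy.
  by apply: translate_shadow; exists x.
apply: le_trans (_ : lam (P1 `|` P2) <= _).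
  by apply: le_lebesgue_n => x Lx; have [] := pselect (shadow K u x); [right|left].
have U2 : lam (P1 `|` P2) <= lam P1 + lam P2 := outer_measureU2 _ P1 P2.
apply: le_trans U2 _.
rewrite -(lebesgue_n_translate P2 u) -(setUKD P1P2).
rewrite -(caratheodory_subset mP1 (@subsetUl _ P1 (translate P2 u))).
by apply: le_lebesgue_n => y [/setD_shadow_sub_mink_segment|/translate_shadow_sub_mink_segment].
Qed.

Lemma lebesgue_n_mink_segment :
  lam (mink_sum K S) + lam L <= lam (mink_sum L S) + lam K.
Proof.
have KSL : mink_sum K S `<=` mink_sum L S by apply: mink_sumS.
have mKS : lam.-caratheodory (mink_sum K S).
  by apply: compact_caratheodory; apply: mink_sum_compact => //; exact: line_segment_compact.
rewrite (caratheodory_subset mKS KSL) (caratheodory_subset (compact_caratheodory cK) KL).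
rewrite [leRHS]addeAC -addeA; apply: leeD => //; apply: leeD => //.
exact: lebesgue_n_setD_le_mink_segment.
Qed.

End SegmentSum.

Section Zonotope.
Variables (R : realType) (n : nat).
Notation V := 'rV[R]_n.+1.
Notation lam := (@lebesgue_n R n.+1).
Local Open Scope ereal_scope.

Lemma lebesgue_n_mink_zonotope_of (K C : set V) k (a b : 'I_k -> V) :
  compact K -> convex_setn K -> compact C -> C !=set0 ->
  lam (mink_sum K (zonotope_of a b)) + lam (mink_sum K C) <=
  lam (mink_sum (mink_sum K (zonotope_of a b)) C) + lam K.
Proof.
move=> cK convK cC [c Cc]; elim: k a b => [|k IH] a b.
  by rewrite zonotope_of0 mink_sum_zero addeC.
rewrite zonotope_ofS /=; set Z := zonotope_of _ _; set u := (b ord_max - a ord_max)%R.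
pose S := line_segment u 0 1; pose K' := mink_sum K Z; pose L := mink_sum K' C.
have cK' : compact K' by apply: mink_sum_compact => //; exact: zonotope_of_compact.
have convK' : convex_setn K'.
  by apply: mink_sum_convex => //; exact: zonotope_of_convex.
have -> : mink_sum K (translate (mink_sum Z S) (a ord_max)) =
          translate (mink_sum K' S) (a ord_max).
  by rewrite mink_sumC mink_sum_translatel (mink_sumC _ K) mink_sumA.
rewrite mink_sum_translatel !lebesgue_n_translate.
have -> : mink_sum (mink_sum K' S) C = mink_sum L S.
  by rewrite !mink_sumA (mink_sumC S).
(* a translate of K' lies in L = K' + C, since C is nonempty *)
have KSL : lam (mink_sum K' S) + lam L <= lam (mink_sum L S) + lam K'.
  have := lebesgue_n_mink_segment u (translate_compact (a := c) cK')
    (translate_convex (a := c) convK') (mink_sum_compact cK' cC).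
  rewrite mink_sum_translatel !lebesgue_n_translate; apply.
  by move=> _ [x K'x <-]; exists x => //; exists c.
have IHK' : lam K' + lam (mink_sum K C) <= lam L + lam K := IH _ _.
have := leeD KSL IHK'.
rewrite (addeC (lam K')) [leLHS]addeACA (addeC (lam L) (lam K)) [leRHS]addeACA.
rewrite (addeC (lam K')) leeD2rE //.
by rewrite fin_numD !lebesgue_n_compact_fin //; exact: mink_sum_compact.
Qed.

End Zonotope.

Section Cube.
Variables (R : realType) (n : nat).
Notation V := 'rV[R]_n.

Definition cube (e : R) : set V := box (const_mx (- e)) (const_mx e).

Lemma cubeP e x : cube e x <-> forall j, `|x ord0 j| <= e.
Proof.
by split => h j; [have := h j; rewrite !mxE ler_norml | rewrite !mxE -ler_norml].
Qed.

Lemma cube_compact e : compact (cube e).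
Proof.
have -> : cube e = [set v : V | forall i, `[- e, e]%classic (v ord0 i)].
  by rewrite predeqE => x; split => h i; [apply/set_itvccP; have := h i
    | have /set_itvccP := h i]; rewrite !mxE.
exact: (@rV_compact _ n (fun i => `[- e, e]%classic)) (fun=> @segment_compact _ _ _).
Qed.

Lemma cube_convex e : convex_setn (cube e).
Proof.
move=> x y t /cubeP hx /cubeP hy t0 t1; apply/cubeP => j; rewrite !mxE.
have t1' : 0 <= 1 - t by rewrite subr_ge0.
apply: le_trans (ler_normD _ _) _; rewrite !normrM (ger0_norm t0) (ger0_norm t1').
apply: le_trans (lerD (ler_wpM2l t0 (hx j)) (ler_wpM2l t1' (hy j))) _.
by rewrite -mulrDl subrKC mul1r.
Qed.

Lemma cube0 e : 0 <= e -> cube e 0.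
Proof. by move=> e0; apply/cubeP => j; rewrite mxE normr0. Qed.

Lemma subset_cube e1 e2 : e1 <= e2 -> cube e1 `<=` cube e2.
Proof. by move=> e12 x /cubeP h; apply/cubeP => j; apply: le_trans (h j) e12. Qed.

Lemma mink_sum_cube e1 e2 : mink_sum (cube e1) (cube e2) `<=` cube (e1 + e2).
Proof.
move=> _ [x /cubeP hx [y /cubeP hy <-]]; apply/cubeP => j; rewrite mxE.
by apply: le_trans (ler_normD _ _) _; apply: lerD.
Qed.

Lemma mink_sum_cube0 (K : set V) e : 0 <= e -> K `<=` mink_sum K (cube e).
Proof.
by move=> e0 x Kx; exists x => //; exists 0; rewrite ?addr0 //; exact: cube0.
Qed.

Lemma bigcap_mink_sum_cube (K : set V) :
  closed K -> \bigcap_m mink_sum K (cube m.+1%:R^-1) = K.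
Proof.
move=> clK; rewrite predeqE => x; split; last first.
  by move=> Kx m _; apply: mink_sum_cube0; rewrite ?invr_ge0.
move=> Kx; apply: clK => B /nbhs_ballP[e /= e0 eB].
have [m me] : exists m : nat, m.+1%:R^-1 < e.
  by exists (Num.truncn e^-1); rewrite invf_plt ?posrE // truncnS_gt.
have [k Kk [c /cubeP hc xE]] := Kx m I.
exists k; split => //; apply: eB; split => // i j; rewrite ord1.
rewrite -ball_normE /ball_ /= -xE mxE addrAC subrr add0r.
exact: le_lt_trans (hc j) me.
Qed.

Lemma edist_coord_le (x y : V) j : `|x ord0 j - y ord0 j| <= Defs.edist x y.
Proof.
rewrite /Defs.edist -sqrtr_sqr ler_sqrt; last by apply: sumr_ge0 => i _; exact: sqr_ge0.
by rewrite (bigD1 j) //= lerDl; apply: sumr_ge0 => i _; exact: sqr_ge0.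
Qed.

Lemma hausdorff_le_sub_mink_cube (B Z : set V) e : hausdorff_le B Z e ->
  B `<=` mink_sum Z (cube e) /\ Z `<=` mink_sum B (cube e).
Proof.
move=> [BZ ZB]; split.
  move=> x /BZ [y [Zy d]]; exists y => //; exists (x - y); last by rewrite addrC subrK.
  by apply/cubeP => j; rewrite !mxE; apply: le_trans (edist_coord_le x y j) d.
move=> y /ZB [x [Bx d]]; exists x => //; exists (y - x); last by rewrite addrC subrK.
by apply/cubeP => j; rewrite !mxE distrC; apply: le_trans (edist_coord_le x y j) d.
Qed.

End Cube.

Section Continuity.
Variables (R : realType) (n : nat).
Notation V := 'rV[R]_n.+1.
Notation lam := (@lebesgue_n R n.+1).
Notation M := (caratheodory_type lam).
Local Open Scope ereal_scope.

Lemma lebesgue_n_mink_sum_cube_le (K : set V) (d : R) : compact K -> (0 < d)%R ->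
  exists2 r : R, (0 < r)%R & lam (mink_sum K (cube r)) <= lam K + d%:E.
Proof.
move=> cK d0; pose F m : set M := mink_sum K (cube m.+1%:R^-1).
have cF m : compact (F m) by apply: mink_sum_compact => //; exact: cube_compact.
have fK := lebesgue_n_compact_fin cK.
have capF : \bigcap_m F m = K.
  by apply: bigcap_mink_sum_cube; exact: compact_closed.
have : lam \o F @ \oo --> lam K.
  rewrite -[X in _ --> lam X]capF.
  pose mu := OuterMeasure.clone R V lam _.
  apply: (@nonincreasing_cvg_mu _ _ _ (mu : set (caratheodory_type mu) -> \bar R)).
  - by rewrite -ge0_fin_numE ?lebesgue_n_ge0 //; exact: lebesgue_n_compact_fin.
  - by move=> m; exact: compact_caratheodory.
  - by apply: bigcapT_measurable => m; exact: compact_caratheodory.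
  - move=> i j ij; rewrite subsetEset; apply: mink_sumS => //; apply: subset_cube.
    by rewrite lef_pV2 ?posrE // ler_nat.
rewrite -(fineK fK) => /fine_cvgP [_] /cvgr_lt /(_ (fine (lam K) + d)%R).
rewrite ltrDl => /(_ d0) [N _ /(_ N (leqnn N))] /=.
rewrite -lte_fin fineK ?lebesgue_n_compact_fin // => /ltW FN.
by exists N.+1%:R^-1%R; rewrite ?invr_gt0 // EFinD fineK.
Qed.

End Continuity.

Section Zonoid.
Variables (R : realType) (n : nat).
Notation V := 'rV[R]_n.+1.
Notation lam := (@lebesgue_n R n.+1).

Lemma mink_sum_zonoid_approx (A B C Z : set V) (r : R) : 0 <= r ->
  B `<=` mink_sum Z (cube (r / 2)) -> Z `<=` mink_sum B (cube (r / 2)) ->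
  [/\ mink_sum A B `<=` mink_sum (mink_sum A (cube (r / 2))) Z,
      mink_sum (mink_sum (mink_sum A (cube (r / 2))) Z) C `<=`
        mink_sum (mink_sum (mink_sum A B) C) (cube r) &
      mink_sum A (cube (r / 2)) `<=` mink_sum A (cube r)].
Proof.
move=> r0 BZ ZB; split.
- rewrite mink_sumA (mink_sumC (cube _)).
  exact: mink_sumS (@subset_refl _ A) BZ.
- move=> _ [_ [_ [x Ax [c1 c1r <-]] [z /ZB [y By [c2 c2r <-]] <-]] [w Cw <-]].
  exists (x + y + w); first by exists (x + y); [exists x => //; exists y | exists w].
  exists (c1 + c2); last by apply/rowP => j; rewrite !mxE; ring.
  by rewrite [r in cube r](splitr r); apply: mink_sum_cube; exists c1 => //; exists c2.
- by apply: mink_sumS (@subset_refl _ A) (subset_cube _); rewrite ler_pdivrMr //; lra.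
Qed.

Local Open Scope ereal_scope.

Lemma lebesgue_n_mink_zonoid (A B C : set V) :
  compact A -> convex_setn A -> zonoid B -> compact C -> C !=set0 ->
  lam (mink_sum A B) + lam (mink_sum A C) <=
  lam (mink_sum (mink_sum A B) C) + lam A.
Proof.
move=> cA convA [cB Bzono] cC C0.
have cABC : compact (mink_sum (mink_sum A B) C).
  by apply: mink_sum_compact => //; exact: mink_sum_compact.
apply/lee_addgt0Pr => e e0.
have e20 : (0 < e / 2)%R by rewrite divr_gt0.
have [r1 r10 ABCr1] := lebesgue_n_mink_sum_cube_le cABC e20.
have [r2 r20 Ar2] := lebesgue_n_mink_sum_cube_le cA e20.
pose r := Num.min r1 r2.
have r0 : (0 < r)%R by rewrite lt_min r10 r20.
have r2_0 : (0 < r / 2)%R by rewrite divr_gt0.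
have [Z [[k [a [b ->]]] /hausdorff_le_sub_mink_cube[BZ ZB]]] := Bzono _ r2_0.
have [AB A'ZC A'A] := mink_sum_zonoid_approx A C (ltW r0) BZ ZB.
pose A' := mink_sum A (cube (r / 2)).
have cA' : compact A' by apply: mink_sum_compact => //; exact: cube_compact.
have convA' : convex_setn A' by apply: mink_sum_convex => //; exact: cube_convex.
have AC : mink_sum A C `<=` mink_sum A' C.
  by apply: mink_sumS (@subset_refl _ C); exact/mink_sum_cube0/ltW.
apply: le_trans (leeD (le_lebesgue_n AB) (le_lebesgue_n AC)) _.
apply: le_trans (lebesgue_n_mink_zonotope_of a b cA' convA' cC C0) _.
apply: le_trans (leeD (le_lebesgue_n A'ZC) (le_lebesgue_n A'A)) _.
apply: le_trans (_ : _ <= lam (mink_sum (mink_sum (mink_sum A B) C) (cube r1))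
                           + lam (mink_sum A (cube r2))) _.
  by apply: leeD; apply: le_lebesgue_n; apply: mink_sumS => //; apply: subset_cube;
    rewrite ge_min lexx ?orbT.
apply: le_trans (leeD ABCr1 Ar2) _.
by rewrite addeACA -EFinD -splitr.
Qed.

End Zonoid.

Theorem theorem3p12 (R : realType) (n : nat) (A B C : set 'rV[R]_n) :
  compact A -> convex_setn A ->
  zonoid B ->
  compact C -> C !=set0 ->
  (lebesgue_n (mink_sum (mink_sum A B) C) + lebesgue_n A >=
   lebesgue_n (mink_sum A B) + lebesgue_n (mink_sum A C))%E.
Proof.
case: n A B C => [|n] A B C cA convA zB cC C0.
  by rewrite !lebesgue_n_dim0.
exact: lebesgue_n_mink_zonoid.
Qed.
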